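(* Let $u$ be a finite game with player set $\mathcal V$ and strategy profile space $\mathcal X$, and let $x^*\in\mathcal X$ be a Nash equilibrium of $u$. Then the margin of robustness of $x^*$ is $$\mu_u(x^* )=\tfrac12\min_{i\in\mathcal V}\chi^u_i(x^* ).$$
   Context: A finite game consists of a finite nonempty player set $\mathcal V$, a finite nonempty action set $\mathcal A_i$ for each $i\in\mathcal V$, the strategy profile space $\mathcal X=\prod_{i\in\mathcal V}\mathcal A_i$, and utilities $u_i:\mathcal X\to\mathbb R$; the game is identified with $u=(u_i)_{i\in\mathcal V}$, and $\mathcal U\cong\mathbb R^{\mathcal V\times\mathcal X}$ is the space of all such games. Norms: $\|u_i\|_\infty=\max_{x\in\mathcal X}|u_i(x)|$, $\|u\|_\infty=\max_{i\in\mathcal V}\|u_i\|_\infty$. Profiles $x,y$ are $i$-comparable, $x\sim_i y$, if they coincide except possibly in entry $i$. Define $\chi^u_i(x)=\min_{y\sim_i x,\,y\neq x}\{u_i(x)-u_i(y)\}$. A (pure strategy) Nash equilibrium is a profile $x^*$ with $\chi^u_i(x^* )\ge0$ for all $i$. The margin of robustness $\mu_u(x^* )$ of a Nash equilibrium $x^*$ of $u$ is the infimum of $\|\delta\|_\infty$ over all perturbations $\delta\in\mathcal U$ such that $x^*$ is not a Nash equilibrium of the perturbed game $u+\delta$. *)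

From HB Require Import structures.
From mathcomp Require Import all_boot all_order all_algebra.
From mathcomp Require Import all_classical all_reals ereal.
Set Implicit Arguments. Unset Strict Implicit. Unset Printing Implicit Defensive.
Import Order.TTheory GRing.Theory Num.Theory.
Local Open Scope ring_scope.
Local Open Scope classical_set_scope.

Section Game.
Variables (R : realType) (V : finType) (A : V -> finType).

Definition profile := {dffun forall i : V, A i}.

Definition game := V -> profile -> R.

Definition game_add (u d : game) : game := fun i x => u i x + d i x.

(* sup norm ||d||_oo = max_i max_x |d_i(x)| (sets nonempty, all terms >= 0) *)
Definition game_norm (d : game) : R :=
  \big[Num.max/0]_(i : V) \big[Num.max/0]_(x : profile) `|d i x|.

Definition icomparable (i : V) (x y : profile) : bool :=
  [forall j : V, (j != i) ==> (x j == y j)].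

Definition chi (u : game) (i : V) (x : profile) : \bar R :=
  \big[Order.min/+oo%E]_(y : profile | icomparable i x y && (y != x))
     ((u i x - u i y)%:E).

Definition is_nash (u : game) (x : profile) : Prop :=
  forall i : V, (0 <= chi u i x)%E.

(* margin of robustness: infimum of ||d|| over perturbations d
   such that x is not a Nash equilibrium of u + d (inf of empty set = +oo) *)
Definition margin (u : game) (x : profile) : \bar R :=
  ereal_inf [set (game_norm d)%:E | d in [set d : game | ~ is_nash (game_add u d) x]].

End Game.

From HB Require Import structures.
From mathcomp Require Import all_boot all_order all_algebra.
From mathcomp Require Import all_classical all_reals ereal.
From mathcomp Require Import lra.

Set Implicit Arguments.
Unset Strict Implicit.
Unset Printing Implicit Defensive.

Import Order.TTheory GRing.Theory Num.Theory.
Local Open Scope ring_scope.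

(* If deviating from the equilibrium x to y costs player i the amount
   u_i(x) - u_i(y) >= 0, a perturbation d can shrink this gap by at most
   2 ||d||, since it moves u_i(x) and u_i(y) by at most ||d|| each; hence
   breaking the equilibrium needs ||d|| > chi_i(x) / 2. Conversely, lowering
   u_i(x) and raising u_i(y) by slightly more than chi_i(x) / 2 makes y a
   profitable deviation. *)

Section Robustness.
Variables (R : realType) (V : finType) (A : V -> finType).
Implicit Types (u d : game R A) (x y : profile A) (i : V).

Lemma ler_game_norm d i x : `|d i x| <= game_norm d.
Proof.
apply: le_trans (le_bigmax _ _ i).
exact: (le_bigmax _ (fun x => `|d i x|) x).
Qed.

Lemma game_norm_le d c : 0 <= c -> (forall i x, `|d i x| <= c) ->
  game_norm d <= c.
Proof. by move=> c0 dc; apply: bigmax_le => // i _; apply: bigmax_le. Qed.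

Lemma chi_le u i x y : icomparable i x y -> y != x ->
  (chi u i x <= (u i x - u i y)%:E)%E.
Proof. by move=> xy yx; apply: bigmin_le_cond; rewrite xy yx. Qed.

Lemma chi_fin_witness u i x r : chi u i x = r%:E ->
  exists2 y, icomparable i x y && (y != x) & r = u i x - u i y.
Proof.
rewrite /chi; have [[y Py]|noy] :=
  pselect (exists y, icomparable i x y && (y != x)); last first.
  by rewrite big_pred0 // => y; apply/negP => Py; apply: noy; exists y.
have [z Pz ->] := eq_bigmin y (fun y => icomparable i x y && (y != x))
  (fun y => (u i x - u i y)%:E) Py (fun _ _ => leey _).
by case=> <-; exists z.
Qed.

Lemma not_nash_deviation u x : ~ is_nash u x ->
  exists i y, [/\ icomparable i x y, y != x & u i x < u i y].
Proof.
move=> notnash; apply: contra_notP notnash => nodev i.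
apply: le_bigmin => // y /andP[xy yx]; rewrite lee_fin subr_ge0 leNgt.
by apply/negP => lt_xy; apply: nodev; exists i, y.
Qed.

Lemma half_bigmin_chi_lt_norm u d x : ~ is_nash (game_add u d) x ->
  ((2%:R)^-1%:E * \big[Order.min/+oo%E]_i chi u i x < (game_norm d)%:E)%E.
Proof.
case/not_nash_deviation => i [y [xy yx]]; rewrite /game_add => lt_xy.
have min_le : (\big[Order.min/+oo%E]_j chi u j x <= (u i x - u i y)%:E)%E.
  by apply: le_trans (chi_le u xy yx); exact: bigmin_le.
apply: le_lt_trans (lee_wpmul2l _ min_le) _; first by rewrite lee_fin.
have := ler_game_norm d i x; have := ler_game_norm d i y.
have := ler_norm (d i y); have := ler_norm (- d i x); rewrite normrN.
rewrite -EFinM lte_fin; lra.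
Qed.

Lemma half_bigmin_chi_le_margin u x :
  ((2%:R)^-1%:E * \big[Order.min/+oo%E]_i chi u i x <= margin u x)%E.
Proof.
apply: le_ereal_inf_tmp => _ [d /= notnash <-].
exact/ltW/half_bigmin_chi_lt_norm.
Qed.

Definition deviation_boost i x y c : game R A := fun j z =>
  if j == i then if z == y then c else if z == x then - c else 0 else 0.

Lemma game_norm_deviation_boost i x y c : 0 <= c ->
  game_norm (deviation_boost i x y c) <= c.
Proof.
move=> c0; apply: game_norm_le => // j z; rewrite /deviation_boost.
case: (j == i); last by rewrite normr0.
case: (z == y); first by rewrite ger0_norm.
by case: (z == x); rewrite ?normrN ?ger0_norm ?normr0.
Qed.

Lemma deviation_boost_not_nash u i x y c : icomparable i x y -> y != x ->
  u i x - u i y < 2 * c -> ~ is_nash (game_add u (deviation_boost i x y c)) x.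
Proof.
move=> xy yx gap_lt /(_ i); apply/negP; rewrite -ltNge.
apply: le_lt_trans (chi_le _ xy yx) _.
rewrite /game_add /deviation_boost eqxx [x == y]eq_sym (negbTE yx) !eqxx.
rewrite lte_fin; lra.
Qed.

Lemma margin_le_half_gap u i x y : icomparable i x y -> y != x ->
  0 <= u i x - u i y -> (margin u x <= ((u i x - u i y) / 2)%:E)%E.
Proof.
move=> xy yx gap0; apply/lee_addgt0Pr => e e0.
pose c := (u i x - u i y) / 2 + e.
apply: ge_ereal_inf; exists (game_norm (deviation_boost i x y c))%:E.
  exists (deviation_boost i x y c) => //.
  by apply: deviation_boost_not_nash => //; rewrite /c; lra.
by rewrite -EFinD lee_fin game_norm_deviation_boost // /c; lra.
Qed.

Lemma margin_le_half_chi u i x : (0 <= chi u i x)%E ->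
  (margin u x <= (2%:R)^-1%:E * chi u i x)%E.
Proof.
case chir: (chi u i x) => [r| |] // r0; last first.
  by rewrite mulry gtr0_sg ?invr_gt0 ?ltr0n // mul1e leey.
have [y /andP[xy yx] rE] := chi_fin_witness chir.
rewrite lee_fin rE in r0; rewrite -EFinM mulrC rE.
exact: margin_le_half_gap.
Qed.

End Robustness.

Theorem proposition1 (R : realType) (V : finType) (A : V -> finType)
  (hV : (0 < #|V|)%N) (hA : forall i : V, (0 < #|A i|)%N)
  (u : game R A) (xs : profile A) (hx : is_nash u xs) :
  margin u xs = ((2%:R)^-1%:E * \big[Order.min/+oo%E]_(i : V) chi u i xs)%E.
Proof.
apply/eqP; rewrite eq_le half_bigmin_chi_le_margin andbT.
have [i0 _] := card_gt0P hV.
have [i _ ->] := eq_bigmin i0 predT (fun i => chi u i xs) isT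
  (fun _ _ => leey _).
exact: margin_le_half_chi.
Qed.
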